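(* For the Markov Transition Model $M$, aggregation scheme $\Phi$, policies $\pi_e,\pi_b$ and offline distribution $\mu_h=d_h^{\pi_b}(\cdot;M)$ of the Example below (with $H\ge2$): (i) $\max_{\pi}\max_{h\in[H]}\max_{x\in\mathcal{X}_h,a\in\mathcal{A}}\frac{d_h^\pi(x,a;M)}{d_h^{\pi_b}(x,a;M)}\le 8H^3$, where the outer maximum ranges over all (non-stationary Markov) policies $\pi$; in particular the standard concentrability coefficient of $\pi_e$ is at most $8H^3$; (ii) for every $\epsilon\le 1/15$, the aggregated concentrability coefficient satisfies $\bar{\mathsf{C}}_\epsilon(M,\Phi,\mu)\ge 2^{H-7}$.
   Context: Example: $H\ge2$; for each $h\in[H]$, $\mathcal{X}_h=\{x_h^{(1)},x_h^{(2)},x_h^{(3)}\}$; $\mathcal{A}=\{a_1,a_2\}$; initial distribution $\rho(x_1^{(1)})=\frac{H-1}{2H}$, $\rho(x_1^{(2)})=\frac{1}{2H}$, $\rho(x_1^{(3)})=\frac12$. For $h\in[H-1]$: under $a_1$, $x_h^{(1)}\to x_{h+1}^{(2)}$, $x_h^{(2)}\to x_{h+1}^{(3)}$, $x_h^{(3)}\to x_{h+1}^{(3)}$ deterministically; under $a_2$, $x_h^{(1)}\to x_{h+1}^{(1)}$ or $x_{h+1}^{(3)}$ each w.p. $1/2$, $x_h^{(2)}\to x_{h+1}^{(2)}$ or $x_{h+1}^{(3)}$ each w.p. $1/2$, $x_h^{(3)}\to x_{h+1}^{(3)}$ w.p. 1. Evaluation policy $\pi_e(x)=a_1$ for all $x$;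 offline policy $\pi_b(a_1|x)=1/H^2$, $\pi_b(a_2|x)=(H^2-1)/H^2$ for all $x$; offline distribution $\mu_h=d_h^{\pi_b}(\cdot;M)$ for all $h\in[H]$. Aggregation: $\Phi_h=\{\phi_h^{(1)},\phi_h^{(2)}\}$ with $\phi_h^{(1)}=\{x_h^{(1)},x_h^{(2)}\}$, $\phi_h^{(2)}=\{x_h^{(3)}\}$. Occupancy: $d_h^\pi(x;M)=\Pr(x_h=x)$ under $x_1\sim\rho$, $a_h\sim\pi(\cdot|x_h)$, $x_{h+1}\sim T(\cdot|x_h,a_h)$; $d_h^\pi(x,a)=d_h^\pi(x)\pi(a|x)$. Aggregated transitions, for $\phi\in\Phi_h,\phi'\in\Phi_{h+1}$: $\bar T(\phi'|\phi,\pi)=\frac{\sum_{x\in\phi}\sum_{x'\in\phi'}\sum_a\pi(a|x)\mu_h(x,a)T(x'|x,a)}{\sum_{x\in\phi}\sum_a\pi(a|x)\mu_h(x,a)}$. Aggregated occupancy $\bar d_h^\pi(\phi)$: law of $\phi_h$ under $\phi_1\sim\bar\rho$, $\phi_{i+1}\sim\bar T(\cdot|\phi_i,\pi)$, $\bar\rho(\phi)=\sum_{x\in\phi}\rho(x)$. Aggregated concentrability: $\bar{\mathsf{C}}_\epsilon(M,\Phi,\mu)=\max_h\max\{\frac{\sum_{\phi\in\mathcal{I}}\bar d_h^{\pi_e}(\phi)}{\sum_{\phi\in\mathcal{I}}\sum_{x\in\phi}\mu_h(x,\pi_e(x))}:\mathcal{I}\subseteq\Phi_h,\ \sum_{\phi\in\mathcal{I}}\bar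 d_h^{\pi_e}(\phi)\ge\epsilon\}$. *)

From mathcomp Require Import all_boot all_order all_algebra.
Set Implicit Arguments. Unset Strict Implicit.
Import Order.TTheory GRing.Theory Num.Theory.
Local Open Scope ring_scope.

(* Layers are 0-indexed: layer h (0 <= h < H) is layer h+1 of the paper.
   State x_h^{(i)} is represented by the ordinal i-1 : 'I_3 (same set at every
   layer); action a_1 is ord 0, a_2 is ord 1 in 'I_2. *)
Notation St := 'I_3.
Notation Act := 'I_2.

Section Example.
Variable R : realFieldType.
Variable H : nat.

Definition rho (x : St) : R :=
  if val x == 0%N then (H%:R - 1) / (2 * H%:R)
  else if val x == 1%N then 1 / (2 * H%:R)
  else 1 / 2.

(* transition kernel T(x'|x,a) (the same at each layer h in [H-1]) *)
Definition T (x : St) (a : Act) (x' : St) : R :=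
  if val a == 0%N then
    (if [|| (val x == 0%N) && (val x' == 1%N),
           (val x == 1%N) && (val x' == 2%N)
         | (val x == 2%N) && (val x' == 2%N)] then 1 else 0)
  else
    (if val x == 2%N then (if val x' == 2%N then 1 else 0)
     else if (x' == x) || (val x' == 2%N) then 1 / 2 else 0).

(* non-stationary Markov policy: pi h x a = pi_h(a | x) *)
Definition policy (pi : nat -> St -> Act -> R) : Prop :=
  (forall h x a, 0 <= pi h x a) /\ (forall h x, \sum_(a : Act) pi h x a = 1).

Fixpoint occ (pi : nat -> St -> Act -> R) (h : nat) (x : St) : R :=
  match h with
  | 0 => rho x
  | h'.+1 => \sum_(y : St) \sum_(a : Act) occ pi h' y * pi h' y a * T y a x
  end.

Definition pie (h : nat) (x : St) (a : Act) : R := if val a == 0%N then 1 else 0.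
Definition pib (h : nat) (x : St) (a : Act) : R :=
  if val a == 0%N then 1 / (H%:R ^+ 2) else (H%:R ^+ 2 - 1) / (H%:R ^+ 2).

Definition mu (h : nat) (x : St) (a : Act) : R := occ pib h x * pib h x a.

(* aggregation: phi^(1) = {x^(1), x^(2)} is ord 0, phi^(2) = {x^(3)} is ord 1 *)
Definition inphi (phi : 'I_2) (x : St) : bool :=
  if val phi == 0%N then val x != 2%N else val x == 2%N.

Definition Tbar (pi : nat -> St -> Act -> R) (h : nat) (phi phi' : 'I_2) : R :=
  (\sum_(x | inphi phi x) \sum_(x' | inphi phi' x') \sum_(a : Act)
      pi h x a * mu h x a * T x a x')
  / (\sum_(x | inphi phi x) \sum_(a : Act) pi h x a * mu h x a).

Fixpoint dbar (pi : nat -> St -> Act -> R) (h : nat) (phi : 'I_2) : R :=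
  match h with
  | 0 => \sum_(x | inphi phi x) rho x
  | h'.+1 => \sum_(psi : 'I_2) dbar pi h' psi * Tbar pi h' psi phi
  end.

Definition pie_act (x : St) : Act := ord0.

Definition Cbar (eps : R) : R :=
  \big[Num.max/0]_(h < H)
    \big[Num.max/0]_(I : {set 'I_2} | eps <= \sum_(phi in I) dbar pie h phi)
      ((\sum_(phi in I) dbar pie h phi)
       / (\sum_(phi in I) \sum_(x | inphi phi x) mu h x (pie_act x))).

End Example.

Arguments rho {R}.
Arguments T {R}.
Arguments occ {R}.
Arguments pie {R}.
Arguments pib {R}.
Arguments mu {R}.
Arguments Tbar {R}.
Arguments dbar {R}.
Arguments Cbar {R}.
Arguments policy {R}.

(* (i) Under any policy the potential d(x2) + 2 d(x1) at least halves at each step, so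
   the mass on {x1, x2} at layer h is at most 2^-h. The behaviour policy keeps a
   (q/2)^h share there, with q = 1 - 1/H^2 and q^h >= 3/4 for h < H (Bernoulli), and
   it plays every action with probability at least 1/H^2; hence every ratio is at
   most 8H * H^2.
   (ii) The mu-weighted aggregated kernel keeps phi1 = {x1, x2} under pi_e only from
   x1, i.e. with probability d_b(x1) / (d_b(x1) + d_b(x2)) = (H^2-1)/(H^2+H+2h). By
   1 + t <= e^t the product of these over h < H-1 is at least e^-2 > 2/15, so the
   aggregated mass of phi1 at the last layer is at least 1/15, while
   mu(phi1, a1) <= 2^-(H-1)/4 there. *)

From mathcomp Require Import all_boot zify.
From Stdlib Require Reals Lra.
Set Implicit Arguments. Unset Strict Implicit. Unset Printing Implicit Defensive.

Lemma sum_arith (a m : nat) : \sum_(k < m) (a + 2 * k) = m * a + m * m.-1.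
Proof.
  elim: m => [|m IH]; first by rewrite big_ord0.
  by rewrite big_ord_recr /= IH; case: m {IH} => [|m] /=; lia.
Qed.

Module ExpEstimates.
Import Reals Lra.
Local Open Scope R_scope.

Lemma exp_natmul (x : R) (m : nat) : exp (INR m * x) = exp x ^ m.
Proof.
  elim: m => [|m IH]; first by rewrite Rmult_0_l exp_0.
  by rewrite S_INR Rmult_plus_distr_r Rmult_1_l exp_plus IH /= Rmult_comm.
Qed.

Lemma exp2_le : exp 2 <= 15 / 2.
Proof.
  have e200 : exp 2 = exp (1 / 100) ^ 200.
    rewrite -exp_natmul; congr exp; rewrite INR_IZR_INZ /=; field.
  (* [exp (-x) >= 1 - x] gives [exp x <= 1 / (1 - x)]. *)
  have e100 : exp (1 / 100) <= 100 / 99.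
    have lo := exp_ineq1_le (- (1 / 100)).
    have inv : exp (1 / 100) * exp (- (1 / 100)) = 1.
      by rewrite -exp_plus Rplus_opp_r exp_0.
    have pos := exp_pos (1 / 100).
    nra.
  rewrite e200; apply: Rle_trans (_ : (100 / 99) ^ 200 <= _).
    by apply: pow_incr; split; [left; apply: exp_pos | exact: e100].
  have num : IZR 100 ^ 200 * 2 <= 15 * IZR 99 ^ 200.
    rewrite !pow_IZR -!mult_IZR; apply: IZR_le; vm_compute; discriminate.
  have pos : 0 < 99 ^ 200 by apply: pow_lt; lra.
  rewrite /Rdiv Rpow_mult_distr pow_inv.
  apply: (Rmult_le_reg_r (99 ^ 200 * 2)); first by nra.
  have -> : 100 ^ 200 * / 99 ^ 200 * (99 ^ 200 * 2) = 100 ^ 200 * 2 by field; lra.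
  have -> : 15 * / 2 * (99 ^ 200 * 2) = 15 * 99 ^ 200 by field.
  exact: num.
Qed.

Lemma INR_prod_addn_le_exp (B : nat) (c : nat -> nat) (m : nat) : (0 < B)%nat ->
  INR (\prod_(k < m) (B + c k))%nat <=
  INR (\prod_(k < m) B)%nat * exp (INR (\sum_(k < m) c k)%nat / INR B).
Proof.
  move=> /ltP /lt_0_INR B0.
  elim: m => [|m IH]; first by rewrite !big_ord0 /= /Rdiv Rmult_0_l exp_0; lra.
  have step : INR B + INR (c m) <= INR B * exp (INR (c m) / INR B).
    have -> : INR B + INR (c m) = INR B * (1 + INR (c m) / INR B) by field; lra.
    by apply: Rmult_le_compat_l; [lra | apply: exp_ineq1_le].
  have cm0 : 0 <= INR B + INR (c m) by have := pos_INR (c m); lra.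
  rewrite !big_ord_recr /= !mult_INR !plus_INR.
  set P := INR (\prod_(k < m) B)%nat in IH *; set S := INR (\sum_(k < m) c k)%nat in IH *.
  apply: Rle_trans (Rmult_le_compat _ _ _ _ (pos_INR _) cm0 IH step) _.
  by right; rewrite Rdiv_plus_distr exp_plus; ring.
Qed.

Lemma survival_prod_bound (n : nat) : (0 < n)%nat ->
  (2 * \prod_(k < n) (n * (n + 2) + (n + 2 + 2 * k)) <= 15 * \prod_(k < n) (n * (n + 2)))%nat.
Proof.
  move=> n0; have B0 : (0 < n * (n + 2))%nat by rewrite muln_gt0 n0 addn2.
  have Bp := lt_0_INR _ (elimT ltP B0).
  have sum_le : (\sum_(k < n) (n + 2 + 2 * k) <= 2 * (n * (n + 2)))%nat.
    by rewrite sum_arith; case: n n0 {B0 Bp} => [|n] //= _; lia.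
  set S := INR (\sum_(k < n) (n + 2 + 2 * k))%nat.
  have exp_le : exp (S / INR (n * (n + 2))) <= 15 / 2.
    apply: Rle_trans exp2_le.
    have : S / INR (n * (n + 2)) <= 2.
      apply: (Rmult_le_reg_r (INR (n * (n + 2)))) => //.
      rewrite /Rdiv Rmult_assoc Rinv_l ?Rmult_1_r; last by lra.
      by move/leP/le_INR: sum_le; rewrite mult_INR.
    by case=> [lt|->]; [left; apply: exp_increasing | right].
  apply/leP/INR_le; rewrite !mult_INR (INR_IZR_INZ 2) (INR_IZR_INZ 15) /=.
  have := INR_prod_addn_le_exp (fun k => n + 2 + 2 * k)%nat n B0; rewrite -/S.
  have := Rmult_le_compat_l _ _ _ (pos_INR (\prod_(k < n) (n * (n + 2)))%nat) exp_le.
  set P := INR (\prod_(k < n) (n * (n + 2)))%nat.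
  set Q := INR (\prod_(k < n) (n * (n + 2) + (n + 2 + 2 * k)))%nat.
  lra.
Qed.
End ExpEstimates.

From mathcomp Require Import all_order all_algebra ring lra.
Import Order.TTheory GRing.Theory Num.Theory.
Local Open Scope ring_scope.

Lemma bernoulli_le_expr (R : realDomainType) (x : R) (n : nat) :
  x <= 1 -> 1 - n%:R * x <= (1 - x) ^+ n.
Proof.
  move=> x_le1; elim: n => [|n IH]; first by rewrite mul0r subr0 expr0.
  rewrite exprS -natr1.
  have : (1 - x) * (1 - n%:R * x) <= (1 - x) * (1 - x) ^+ n.
    by apply: ler_wpM2l; lra.
  have : 0 <= n%:R * x ^+ 2 by rewrite mulr_ge0 ?sqr_ge0.
  rewrite expr2; lra.
Qed.

Section Example.
Variables (R : realFieldType) (H : nat).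
Hypothesis H_gt1 : (1 < H)%N.

Local Notation Hr := (H%:R : R).

Definition x1 : St := @Ordinal 3 0 isT.
Definition x2 : St := @Ordinal 3 1 isT.
Definition x3 : St := @Ordinal 3 2 isT.
Definition a1 : Act := ord0.
Definition a2 : Act := @Ordinal 2 1 isT.

Lemma StP (x : St) : [\/ x = x1, x = x2 | x = x3].
Proof. by case: x => [[|[|[|//]]] ?]; [apply: Or31 | apply: Or32 | apply: Or33]; apply: val_inj. Qed.

Lemma ActP (a : Act) : a = a1 \/ a = a2.
Proof. by case: a => [[|[|//]] ?]; [left | right]; apply: val_inj. Qed.

Lemma sum_St (F : St -> R) : \sum_x F x = F x1 + F x2 + F x3.
Proof. by rewrite !big_ord_recr big_ord0 /= add0r; congr (F _ + F _ + F _); apply: val_inj. Qed.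

Lemma sum_Act (F : Act -> R) : \sum_a F a = F a1 + F a2.
Proof. by rewrite !big_ord_recr big_ord0 /= add0r; congr (F _ + F _); apply: val_inj. Qed.

Lemma Hr_ge2 : 2 <= Hr.
Proof. by rewrite ler_nat. Qed.

Lemma Hr_neq0 : Hr != 0.
Proof. by rewrite pnatr_eq0 -lt0n ltnW. Qed.

Section Occupancy.
Variable pi : nat -> St -> Act -> R.

Lemma occ_x1S h : occ H pi h.+1 x1 = occ H pi h x1 * pi h x1 a2 / 2.
Proof. by rewrite /= sum_St !sum_Act /T /=; field. Qed.

Lemma occ_x2S h :
  occ H pi h.+1 x2 = occ H pi h x1 * pi h x1 a1 + occ H pi h x2 * pi h x2 a2 / 2.
Proof. by rewrite /= sum_St !sum_Act /T /=; field. Qed.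

Lemma occ_x3S h : occ H pi h.+1 x3 =
  occ H pi h x1 * pi h x1 a2 / 2 + occ H pi h x2 * (pi h x2 a1 + pi h x2 a2 / 2)
  + occ H pi h x3 * (pi h x3 a1 + pi h x3 a2).
Proof. by rewrite /= sum_St !sum_Act /T /=; field. Qed.

Hypothesis pi_policy : policy pi.

Lemma policy_ge0 h x a : 0 <= pi h x a.
Proof. by case: pi_policy. Qed.

Lemma policy_a1 h x : pi h x a1 = 1 - pi h x a2.
Proof. by case: pi_policy => _ /(_ h x); rewrite sum_Act => <-; rewrite addrK. Qed.

Lemma policy_le1 h x a : pi h x a <= 1.
Proof.
  have := policy_ge0 h x a1; have := policy_ge0 h x a2; rewrite policy_a1.
  by case: (ActP a) => ->; rewrite ?policy_a1; lra.
Qed.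

Lemma occ_ge0 h x : 0 <= occ H pi h x.
Proof.
  elim: h x => [|h IH] x.
    have := Hr_ge2; case: (StP x) => -> /= ?; rewrite /rho /=.
    - by apply: divr_ge0; lra.
    - by apply: divr_ge0; lra.
    - lra.
  have pi0 := policy_ge0 h; have occ0 := IH.
  case: (StP x) => ->; rewrite ?occ_x1S ?occ_x2S ?occ_x3S.
  - by rewrite divr_ge0 ?mulr_ge0.
  - by rewrite addr_ge0 ?divr_ge0 ?mulr_ge0.
  - by rewrite !addr_ge0 ?divr_ge0 ?mulr_ge0 ?addr_ge0 ?divr_ge0.
Qed.

Lemma occ_sum h : occ H pi h x1 + occ H pi h x2 + occ H pi h x3 = 1.
Proof.
  elim: h => [|h IH].
    by rewrite /= /rho /=; field; rewrite Hr_neq0.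
  by rewrite occ_x1S occ_x2S occ_x3S !policy_a1 -[RHS]IH; field.
Qed.

Lemma occ_le1 h x : occ H pi h x <= 1.
Proof.
  have := occ_sum h; have := occ_ge0 h x1; have := occ_ge0 h x2; have := occ_ge0 h x3.
  by case: (StP x) => ->; lra.
Qed.

(* Mass leaving [x1] counts at most once in the new potential instead of twice, and
   [x2] keeps at most half of its mass. *)
Lemma escape_potentialS h :
  occ H pi h.+1 x2 + 2 * occ H pi h.+1 x1 <= (occ H pi h x2 + 2 * occ H pi h x1) / 2.
Proof.
  rewrite occ_x1S occ_x2S policy_a1.
  have := mulr_ge0 (occ_ge0 h x2) (policy_ge0 h x2 a1); rewrite policy_a1.
  lra.
Qed.

Lemma escape_potential_le h : 2 ^+ h * (occ H pi h x2 + 2 * occ H pi h x1) <= 1.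
Proof.
  elim: h => [|h IH].
    rewrite expr0 mul1r /= /rho /=; have := Hr_ge2 => ?.
    rewrite -subr_ge0 (_ : _ - _ = 1 / (2 * Hr)); last by field; rewrite Hr_neq0.
    by apply: divr_ge0; lra.
  apply: le_trans IH; rewrite exprSr -mulrA.
  by apply: ler_wpM2l; [rewrite exprn_ge0 | have := escape_potentialS h; lra].
Qed.

Lemma occ_x3_ge h : 1 / 2 <= occ H pi h x3.
Proof.
  elim: h => [|h IH]; first by rewrite /= /rho.
  rewrite occ_x3S (policy_a1 h x3) subrK mulr1.
  have := mulr_ge0 (occ_ge0 h x1) (policy_ge0 h x1 a2).
  have := mulr_ge0 (occ_ge0 h x2) (policy_ge0 h x2 a1).
  have := mulr_ge0 (occ_ge0 h x2) (policy_ge0 h x2 a2).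
  lra.
Qed.

End Occupancy.

Local Notation db := (occ H (pib (R:=R) H)).

Definition p : R := 1 / Hr ^+ 2.
Definition q : R := (Hr ^+ 2 - 1) / Hr ^+ 2.
Definition c0 : R := (Hr - 1) / (2 * Hr).

Lemma Hr_sqr_ge4 : 4 <= Hr ^+ 2.
Proof. by have := Hr_ge2; rewrite expr2; nra. Qed.

Lemma p_gt0 : 0 < p.
Proof. by rewrite divr_gt0 //; have := Hr_sqr_ge4; lra. Qed.

Lemma p_le_quarter : p <= 1 / 4.
Proof. by rewrite ler_pdivrMr; have := Hr_sqr_ge4; lra. Qed.

Lemma q_eq : q = 1 - p.
Proof. by rewrite /q /p; field; exact: Hr_neq0. Qed.

Lemma c0_gt0 : 0 < c0.
Proof. by have := Hr_ge2 => ?; rewrite divr_gt0 //; lra. Qed.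

Lemma pib_a1 h x : pib (R:=R) H h x a1 = p. Proof. by []. Qed.
Lemma pib_a2 h x : pib (R:=R) H h x a2 = q. Proof. by []. Qed.

Lemma pib_policy : policy (pib (R:=R) H).
Proof.
  have := p_gt0; have := p_le_quarter; split=> [h x a|h x].
    by case: (ActP a) => ->; rewrite ?pib_a1 ?pib_a2 ?q_eq; lra.
  by rewrite sum_Act pib_a1 pib_a2 q_eq addrC subrK.
Qed.

Lemma occ_pib_x1 h : db h x1 = c0 * (q / 2) ^+ h.
Proof.
  elim: h => [|h IH]; first by rewrite expr0 mulr1.
  by rewrite occ_x1S IH pib_a2 exprS; field.
Qed.

Lemma occ_pib_x2 h :
  db h x2 = (q / 2) ^+ h * (1 / (2 * Hr) + h%:R / (Hr * (Hr + 1))).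
Proof.
  have HrS_neq0 : Hr + 1 != 0 by rewrite natr1 pnatr_eq0.
  elim: h => [|h IH]; first by rewrite expr0 mul0r addr0 mul1r.
  rewrite occ_x2S IH occ_pib_x1 pib_a1 pib_a2 exprS /c0 /p /q -natr1.
  by field; rewrite HrS_neq0 Hr_neq0.
Qed.

Lemma q_half_expr_gt0 h : 0 < (q / 2) ^+ h.
Proof. by rewrite exprn_gt0 // divr_gt0 // q_eq; have := p_le_quarter; lra. Qed.

Lemma occ_pib_gt0 h x : 0 < db h x.
Proof.
  have qh_gt0 := q_half_expr_gt0 h; have := Hr_ge2 => ?; case: (StP x) => ->.
  - by rewrite occ_pib_x1 mulr_gt0 ?c0_gt0.
  - rewrite occ_pib_x2 mulr_gt0 // ltr_pwDl ?divr_gt0 ?divr_ge0 ?mulr_ge0 //; lra.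
  - by have := occ_x3_ge pib_policy h; lra.
Qed.

Lemma expr_q_ge h : (h < H)%N -> 3 / 4 <= q ^+ h.
Proof.
  move=> lt_hH; rewrite q_eq; apply: le_trans (bernoulli_le_expr _ _); last first.
    by have := p_le_quarter; lra.
  have h_le : h%:R <= Hr - 1 by rewrite lerBrDr natr1 ler_nat.
  have : h%:R * p <= (Hr - 1) * p by rewrite ler_wpM2r // ltW ?p_gt0.
  have : (Hr - 1) * p <= 1 / 4.
    rewrite /p mulrA mulr1 ler_pdivrMr; last by have := Hr_sqr_ge4; lra.
    by have := Hr_ge2; rewrite expr2; nra.
  lra.
Qed.

Lemma expr_mul_half h : 2 ^+ h * (q / 2) ^+ h = q ^+ h.
Proof. by rewrite -exprMn mulrC divfK ?pnatr_eq0. Qed.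

Lemma occ_le_pib pi h x : policy pi -> (h < H)%N -> occ H pi h x <= 8 * Hr * db h x.
Proof.
  move=> pi_pol lt_hH; have := Hr_ge2 => Hr2.
  have t_gt0 : 0 < 2 ^+ h :> R by rewrite exprn_gt0.
  have escape := escape_potential_le pi_pol h.
  have td1 := mulr_ge0 (ltW t_gt0) (occ_ge0 pi_pol h x1).
  have td2 := mulr_ge0 (ltW t_gt0) (occ_ge0 pi_pol h x2).
  have qh := expr_q_ge lt_hH.
  case: (StP x) => ->.
  - rewrite -(ler_pM2l t_gt0) occ_pib_x1.
    have -> : 2 ^+ h * (8 * Hr * (c0 * (q / 2) ^+ h)) = 4 * (Hr - 1) * q ^+ h.
      by rewrite -expr_mul_half /c0; field; exact: Hr_neq0.
    have : 3 / 4 <= (Hr - 1) * q ^+ h by nra.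
    nra.
  - rewrite -(ler_pM2l t_gt0) occ_pib_x2.
    set y := h%:R / (Hr * (Hr + 1)).
    have y_ge0 : 0 <= y by rewrite divr_ge0 ?mulr_ge0 //; lra.
    have -> : 2 ^+ h * (8 * Hr * ((q / 2) ^+ h * (1 / (2 * Hr) + y))) =
              q ^+ h * (4 + 8 * Hr * y).
      by rewrite -expr_mul_half; field; exact: Hr_neq0.
    have : 0 <= q ^+ h * (8 * Hr * y) by apply: mulr_ge0; [lra | apply: mulr_ge0; lra].
    nra.
  - have := occ_le1 pi_pol h x3; have := occ_x3_ge pib_policy h; nra.
Qed.

Lemma concentrability_le pi h x a : policy pi -> (h < H)%N ->
  occ H pi h x * pi h x a / (db h x * pib H h x a) <= 8 * Hr ^+ 3.
Proof.
  move=> pi_pol lt_hH; have db_gt0 := occ_pib_gt0 h x.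
  have pib_ge_p : p <= pib H h x a.
    by case: (ActP a) => ->; rewrite ?pib_a1 ?pib_a2 ?q_eq //; have := p_le_quarter; lra.
  have p_gt0 := p_gt0.
  rewrite ler_pdivrMr; last by rewrite mulr_gt0 //; lra.
  have occ_ge0 := occ_ge0 pi_pol h x.
  apply: (@le_trans _ _ (occ H pi h x)).
    by rewrite -[leRHS]mulr1 ler_wpM2l ?(policy_le1 pi_pol).
  apply: le_trans (occ_le_pib x pi_pol lt_hH) _.
  have -> : 8 * Hr = 8 * Hr ^+ 3 * p by rewrite /p; field; exact: Hr_neq0.
  rewrite -mulrA; apply: ler_wpM2l.
    by rewrite mulr_ge0 ?exprn_ge0 //; have := Hr_ge2; lra.
  by rewrite mulrC; apply: ler_wpM2l => //; apply: ltW.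
Qed.

Definition phi1 : 'I_2 := ord0.
Definition phi2 : 'I_2 := @Ordinal 2 1 isT.

Local Notation dbe := (dbar H (pie (R:=R))).
Local Notation Tbe := (Tbar H (pie (R:=R))).

Lemma sum_St_cond (P : pred St) (F : St -> R) : \sum_(x | P x) F x =
  (if P x1 then F x1 else 0) + (if P x2 then F x2 else 0) + (if P x3 then F x3 else 0).
Proof. by rewrite big_mkcond sum_St. Qed.

Lemma dbar_pie_phi1_0 : dbe 0 phi1 = 1 / 2.
Proof. by rewrite /= sum_St_cond /= /rho /=; field; exact: Hr_neq0. Qed.

Lemma Tbar_pie_phi2_phi1 h : Tbe h phi2 phi1 = 0.
Proof. by rewrite /Tbar !sum_St_cond !sum_Act /= /T /pie /= !(mulr0, mul0r, addr0, add0r). Qed.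

Lemma Tbar_pie_phi1_phi1 h : Tbe h phi1 phi1 = db h x1 / (db h x1 + db h x2).
Proof.
  rewrite /Tbar !sum_St_cond !sum_Act /= /T /pie /= /mu !pib_a1.
  rewrite !(mulr0, mul0r, addr0, add0r, mul1r, mulr1) -mulrDl.
  have := occ_pib_gt0 h x1; have := occ_pib_gt0 h x2; have := p_gt0 => *.
  by field; rewrite !gt_eqF //; lra.
Qed.

Lemma dbar_pie_phi1S h : dbe h.+1 phi1 = dbe h phi1 * (db h x1 / (db h x1 + db h x2)).
Proof. by rewrite [LHS]/= sum_Act Tbar_pie_phi1_phi1 Tbar_pie_phi2_phi1 mulr0 addr0. Qed.

Definition stay_ratio (k : nat) : R := (Hr ^+ 2 - 1) / (Hr ^+ 2 + Hr + 2 * k%:R).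

Lemma occ_pib_x1_share k : db k x1 / (db k x1 + db k x2) = stay_ratio k.
Proof.
  have := Hr_sqr_ge4; have := Hr_ge2 => Hr2 Hr4.
  have HrS_neq0 : Hr + 1 != 0 by rewrite natr1 pnatr_eq0.
  have den_neq0 : Hr ^+ 2 + Hr + 2 * k%:R != 0 by rewrite gt_eqF //; have := ler0n R k; lra.
  rewrite occ_pib_x1 occ_pib_x2 (mulrC c0) -mulrDr invfM mulrACA mulfV ?mul1r;
    last by rewrite gt_eqF ?q_half_expr_gt0.
  have -> : c0 + ((2 * Hr)^-1 + k%:R / (Hr * (Hr + 1))) =
      (Hr ^+ 2 + Hr + 2 * k%:R) / (2 * Hr * (Hr + 1)).
    by rewrite /c0; field; rewrite HrS_neq0 Hr_neq0.
  by rewrite /c0 /stay_ratio; field; rewrite den_neq0 HrS_neq0 Hr_neq0.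
Qed.

Lemma dbar_pie_phi1 h : dbe h phi1 = 1 / 2 * \prod_(k < h) stay_ratio k.
Proof.
  elim: h => [|h IH]; first by rewrite big_ord0 mulr1 dbar_pie_phi1_0.
  by rewrite dbar_pie_phi1S IH occ_pib_x1_share big_ord_recr [RHS]mulrA.
Qed.

Lemma dbar_pie_phi1_last n : H = n.+1 -> 1 / 15 <= dbe n phi1.
Proof.
  move=> H_eq; have n_gt0 : (0 < n)%N by rewrite -ltnS -H_eq.
  pose B := (n * (n + 2))%N.
  have ratio_nat k : stay_ratio k = B%:R / (B + (n + 2 + 2 * k))%:R.
    by rewrite /stay_ratio /B H_eq -addn1 !natrD !natrM; congr (_ / _); ring.
  rewrite dbar_pie_phi1; under eq_bigr => k _ do rewrite ratio_nat.
  rewrite prodf_div -!natr_prod mulrA ler_pdivlMr; last by rewrite ltr0n prodn_gt0 // => i; lia.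
  have := ExpEstimates.survival_prod_bound n_gt0; rewrite -(ler_nat R) !natrM -/B.
  lra.
Qed.

Lemma mu_phi1 h : \sum_(phi in [set phi1]) \sum_(x | inphi phi x) mu H h x (pie_act x) =
  p * (db h x1 + db h x2).
Proof. by rewrite big_set1 sum_St_cond /= /mu /pie_act !pib_a1 addr0 mulrDr !(mulrC p). Qed.

Lemma mu_phi1_le h : (h < H)%N -> 2 ^+ h * (p * (db h x1 + db h x2)) <= 1 / 4.
Proof.
  move=> lt_hH; have := Hr_ge2 => Hr2.
  rewrite occ_pib_x1 occ_pib_x2; set y := h%:R / (Hr * (Hr + 1)).
  have -> : 2 ^+ h * (p * (c0 * (q / 2) ^+ h + (q / 2) ^+ h * (1 / (2 * Hr) + y))) =
      p * q ^+ h * (1 / 2 + y).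
    by rewrite -expr_mul_half /c0; field; exact: Hr_neq0.
  have y_ge0 : 0 <= y by rewrite divr_ge0 ?mulr_ge0 //; lra.
  have y_le : y <= 1 / 2.
    rewrite ler_pdivrMr; last by rewrite mulr_gt0 //; lra.
    have : h%:R <= Hr - 1 by rewrite lerBrDr natr1 ler_nat.
    nra.
  have qh_le1 : q ^+ h <= 1 by rewrite exprn_ile1 // q_eq; have := p_le_quarter; have := p_gt0; lra.
  have qh_ge0 : 0 <= q ^+ h by rewrite exprn_ge0 // q_eq; have := p_le_quarter; lra.
  have := p_le_quarter; have := p_gt0 => *.
  have : q ^+ h * (1 / 2 + y) <= 1 by nra.
  nra.
Qed.

Lemma exprz_2_pred7 n : (2 : R) ^ (n.+1%:Z - 7%:Z) = 2 ^+ n / 64.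
Proof.
  have -> : (n.+1%:Z - 7%:Z = n%:Z + Negz 5)%R by rewrite NegzE; lia.
  rewrite expfzDr ?pnatr_eq0 // -exprnP /exprz !exprS expr0.
  by field.
Qed.

Lemma Cbar_ge n (eps : R) : H = n.+1 -> eps <= 1 / 15 -> 2 ^ (H%:Z - 7%:Z) <= Cbar H eps.
Proof.
  move=> H_eq eps_le; have lt_nH : (n < H)%N by rewrite H_eq.
  have dbar_ge := dbar_pie_phi1_last H_eq.
  have mass_phi1 : \sum_(phi in [set phi1]) dbe n phi = dbe n phi1 by rewrite big_set1.
  apply: le_trans (le_bigmax _ _ (Ordinal lt_nH)).
  have eps_mass : eps <= \sum_(phi in [set phi1]) dbe n phi by rewrite mass_phi1; lra.
  apply: le_trans (le_bigmax_cond (j := [set phi1]) _ _ eps_mass) => /=.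
  have -> : (2 : R) ^ (H%:Z - 7%:Z) = 2 ^+ n / 64 by rewrite H_eq exprz_2_pred7.
  rewrite mass_phi1 mu_phi1.
  have D_gt0 : 0 < p * (db n x1 + db n x2).
    by rewrite mulr_gt0 ?p_gt0 // addr_gt0 ?occ_pib_gt0.
  have D_le := mu_phi1_le lt_nH.
  rewrite ler_pdivlMr // mulrAC; lra.
Qed.

End Example.

Theorem mainTheorem4 (R : realFieldType) (H : nat) (hH : (2 <= H)%N) :
  (forall pi : nat -> 'I_3 -> 'I_2 -> R, policy pi ->
     forall h : nat, (h < H)%N -> forall (x : 'I_3) (a : 'I_2),
       occ H pi h x * pi h x a / (occ H (pib H) h x * pib H h x a)
         <= 8 * H%:R ^+ 3)
  /\
  (forall eps : R, eps <= 1 / 15 ->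
     (2 : R) ^ (H%:Z - 7%:Z) <= Cbar H eps).
Proof.
  split=> [pi pi_pol h lt_hH x a | eps eps_le].
    exact: concentrability_le.
  by case: H hH => [//|n] hH; apply: Cbar_ge.
Qed.
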